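(* Let $d$ be a feasible integer and let $\{\zeta_i\}_{i=0}^d$ be any sequence of scalars in $\mathbb F$ with $\zeta_0=1$. Then there exists a standard $U_q(\widehat{\mathfrak{sl}}_2)$-module $V$ of diameter $d$ whose split sequence is $\{\zeta_i\}_{i=0}^d$.
   Context: Let $\mathbb F$ be an algebraically closed field and fix nonzero $q\in\mathbb F$ with $q^2\ne1$; write $[n]_q=(q^n-q^{-n})/(q-q^{-1})$. $U_q(\widehat{\mathfrak{sl}}_2)$ is the associative unital $\mathbb F$-algebra with generators $e_i^{\pm},K_i^{\pm1}$ ($i\in\{0,1\}$) and relations $K_iK_i^{-1}=K_i^{-1}K_i=1$, $K_0K_1=K_1K_0$, $K_ie_i^{\pm}K_i^{-1}=q^{\pm2}e_i^{\pm}$, $K_ie_j^{\pm}K_i^{-1}=q^{\mp2}e_j^{\pm}$ ($i\ne j$), $e_i^+e_i^--e_i^-e_i^+=(K_i-K_i^{-1})/(q-q^{-1})$, $e_0^{\pm}e_1^{\mp}=e_1^{\mp}e_0^{\pm}$, and $(e_i^\pm)^3e_j^\pm-[3]_q(e_i^\pm)^2e_j^\pm e_i^\pm+[3]_qe_i^\pm e_j^\pm(e_i^\pm)^2-e_j^\pm(e_i^\pm)^3=0$ ($i\ne j$). Tensor products of modules are formed via $e_i^+(v\otimes w)=e_i^+v\otimes K_iw+v\otimes e_i^+w$, $e_i^-(v\otimes w)=e_i^-v\otimes w+K_i^{-1}v\otimes e_i^-w$, $K_i(v\otimes w)=K_iv\otimes K_iw$. For nonzero $\alpha\in\mathbb F$,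 $V(\alpha)$ is the module with basis $x,y$ and $K_1x=qx$, $K_1y=q^{-1}y$, $e_1^-x=y$, $e_1^-y=0$, $e_1^+x=0$, $e_1^+y=x$, $K_0x=q^{-1}x$, $K_0y=qy$, $e_0^-x=0$, $e_0^-y=q\alpha^{-1}x$, $e_0^+x=q^{-1}\alpha y$, $e_0^+y=0$. A standard module of diameter $d$ is $V(\alpha_1)\otimes\cdots\otimes V(\alpha_d)$ with all $\alpha_i\in\mathbb F$ nonzero (for $d=0$: the trivial module, on which each $e_i^\pm$ acts as $0$ and each $K_i^{\pm1}$ as $1$). An integer $d$ is feasible if $d\ge0$ and $q^{2i}\ne1$ for $1\le i\le d$. For a standard $V$ of diameter $d$ and $0\le i\le d$, $U_i$ is the span of the basis vectors $v_1\otimes\cdots\otimes v_d$ ($v_k\in\{x,y\}$) with exactly $i$ factors equal to $y$. Fix nonzero $b,c,b^*,c^*\in\mathbb F$ and $u,v,u^*,v^*\in\mathbb F$ with $uv^*=-bb^*q^{-1}(q-q^{-1})^2$ and $vu^*=-cc^*q^{-1}(q-q^{-1})^2$; set $R=ue_0^++ve_1^-K_1$ and $L=u^*e_1^++v^*e_0^-K_0$. For a standard $V$ of feasible diameter $d$ and $0\le i\le d$, $L^iR^i$ maps the $1$-dimensional space $U_0$ into itself; the scalar $\zeta_i$ by which it acts there defines the split sequence $\{\zeta_i\}_{i=0}^d$ of $V$ (so $\zeta_0=1$). *)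

From HB Require Import structures.
From mathcomp Require Import all_boot all_order all_algebra.
Set Implicit Arguments. Unset Strict Implicit. Unset Printing Implicit Defensive.
Import Order.TTheory GRing.Theory.
Local Open Scope ring_scope.

(* Dimension of a standard module of diameter n: 2^n, written recursively so
   that a tensor factor V(alpha) (dim 2) splits off as a block decomposition. *)
Fixpoint tdim (n : nat) : nat := if n is n'.+1 then (tdim n' + tdim n')%N else 1%N.

(* Kronecker product A (x) B of a 2x2 matrix A with B, basis of the first
   factor ordered (x, y). *)
Definition kron2 (F : fieldType) (m n : nat) (A : 'M[F]_2) (B : 'M[F]_(m, n))
  : 'M[F]_(m + m, n + n) :=
  block_mx (A ord0 ord0 *: B) (A ord0 ord_max *: B)
           (A ord_max ord0 *: B) (A ord_max ord_max *: B).

Inductive gen := E0p | E0m | E1p | E1m | K0 | K1 | K0i | K1i.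

(* Action on V(alpha), as matrices acting on column coordinate vectors w.r.t.
   the basis (x, y): column j is the image of the j-th basis vector. *)
Definition act1 (F : fieldType) (q a : F) (g : gen) : 'M[F]_2 :=
  match g with
  | K1  => \matrix_(i, j) (if i == j then (if i == ord0 then q else q^-1) else 0)
  | K1i => \matrix_(i, j) (if i == j then (if i == ord0 then q^-1 else q) else 0)
  | K0  => \matrix_(i, j) (if i == j then (if i == ord0 then q^-1 else q) else 0)
  | K0i => \matrix_(i, j) (if i == j then (if i == ord0 then q else q^-1) else 0)
  | E1m => \matrix_(i, j) (if (i == ord_max) && (j == ord0) then 1 else 0)
  | E1p => \matrix_(i, j) (if (i == ord0) && (j == ord_max) then 1 else 0)
  | E0m => \matrix_(i, j) (if (i == ord0) && (j == ord_max) then q * a^-1 else 0)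
  | E0p => \matrix_(i, j) (if (i == ord_max) && (j == ord0) then q^-1 * a else 0)
  end.

(* Action on V(a_1) (x) ... (x) V(a_d), via the coproduct
   e_i^+ |-> e_i^+ (x) K_i + 1 (x) e_i^+,
   e_i^- |-> e_i^- (x) 1 + K_i^{-1} (x) e_i^-,
   K_i^{+-1} |-> K_i^{+-1} (x) K_i^{+-1}. *)
Fixpoint act (F : fieldType) (q : F) (s : seq F) (g : gen)
  : 'M[F]_(tdim (size s)) :=
  match s return 'M[F]_(tdim (size s)) with
  | [::] => match g with K0 | K1 | K0i | K1i => 1%:M | _ => 0 end
  | a :: s' =>
    match g with
    | E0p => kron2 (act1 q a E0p) (act q s' K0) + kron2 1%:M (act q s' E0p)
    | E1p => kron2 (act1 q a E1p) (act q s' K1) + kron2 1%:M (act q s' E1p)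
    | E0m => kron2 (act1 q a E0m) 1%:M + kron2 (act1 q a K0i) (act q s' E0m)
    | E1m => kron2 (act1 q a E1m) 1%:M + kron2 (act1 q a K1i) (act q s' E1m)
    | g' => kron2 (act1 q a g') (act q s' g')
    end
  end.

(* The vector x (x) x (x) ... (x) x spanning U_0. *)
Fixpoint vx (F : fieldType) (n : nat) : 'cV[F]_(tdim n) :=
  match n return 'cV[F]_(tdim n) with
  | 0 => 1%:M
  | n'.+1 => col_mx (vx F n') 0
  end.

Definition Rop (F : fieldType) (q u v : F) (s : seq F) :=
  u *: act q s E0p + v *: (act q s E1m *m act q s K1).
Definition Lop (F : fieldType) (q us vs : F) (s : seq F) :=
  us *: act q s E1p + vs *: (act q s E0m *m act q s K0).

Definition feasible (F : fieldType) (q : F) (d : nat) : Prop :=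
  forall i : nat, (1 <= i <= d)%N -> q ^+ (2 * i) != 1.

From HB Require Import structures.
From mathcomp Require Import all_boot all_order all_algebra.
From mathcomp Require Import ring.
Import GRing.Theory.
Local Open Scope ring_scope.

(* Write V = V(a) (x) W with n = diam W.  In the basis x (x) -, y (x) - the
   operator R is block lower and L block upper triangular, with diagonal blocks
   R_W, L_W and off-diagonal blocks that are combinations of K_0 and K_1.  As R
   lowers and L raises the K_1-weight by q^2, iterating on x (x) x (x) ... (x) x
   gives the recurrence (split_sequence)
     zeta_{i+1}(V) = zeta_{i+1}(W) + c_i (beta(a) + gamma_{n,i}) zeta_i(W),
   with c_i = (1 + q^2 + ... + q^2i)(1 + q^-2 + ... + q^-2i), nonzero for i < d
   by feasibility, beta(a) = u u* q^-1 a + v v* q^3 a^-1, and gamma free of a.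
   The abstract lemma recseq_interpolation then shows, by induction on d, that
   such a recurrence attains any target: a root t of a degree-d polynomial fixes
   the target for W, and a is a nonzero solution of beta(a) = t, which exists
   over an algebraically closed field because u, v, u*, v* are nonzero. *)

Definition geom {R : pzRingType} (x : R) j := \sum_(k < j) x ^+ k.

Lemma geomS {R : pzRingType} (x : R) j : geom x j.+1 = geom x j + x ^+ j.
Proof. by rewrite /geom big_ord_recr. Qed.

Lemma geom_inv {F : fieldType} (x : F) j : x != 0 -> geom x^-1 j.+1 = geom x j.+1 / x ^+ j.
Proof.
move=> x_neq0; rewrite /geom mulr_suml (reindex_inj rev_ord_inj); apply: eq_bigr => k _ /=.
have -> : x ^+ j = x ^+ (j - k) * x ^+ k by rewrite -exprD subnK // -ltnS.
by rewrite subSS exprVn invfM mulrCA mulfV ?expf_neq0 ?mulr1.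
Qed.

(* (x - 1) * geom x j = x^j - 1, so geom x j vanishes only if x^j = 1. *)
Lemma geom_neq0 {R : pzRingType} (x : R) j : x ^+ j != 1 -> geom x j != 0.
Proof. by apply: contraNneq => geom0; rewrite -subr_eq0 subrX1 -/(geom x j) geom0 mulr0. Qed.

Lemma iter_mulmx_scale {R : comPzRingType} n m (M : 'M[R]_n) (c : R) (z : 'M_(n, m)) i :
  iter i (mulmx M) (c *: z) = c *: iter i (mulmx M) z.
Proof. by elim: i => //= i ->; rewrite scalemxAr. Qed.

(* An abstract form of the recurrence satisfied by split sequences: a sequence
   s = a :: s' is sent to recseq s, computed from recseq s' with a coefficient
   whose only dependence on the new entry a is through bet a. *)
Section Recurrence.
Context {F : idomainType}.
Variables (c : nat -> F) (gam : nat -> nat -> F) (bet : F -> F).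

Fixpoint recseq (s : seq F) (i : nat) : F :=
  match s, i with
  | [::], 0 => 1
  | [::], _.+1 => 0
  | _ :: _, 0 => 1
  | a :: s', i'.+1 => recseq s' i'.+1 + c i' * (bet a + gam (size s') i') * recseq s' i'
  end.

Lemma recseq_big s i : (size s < i)%N -> recseq s i = 0.
Proof.
by elim: s i => [|a s IH] [|i] //= hi; rewrite !IH ?mulr0 ?addr0 // ltnW.
Qed.

(* interp_poly z n k evaluated at t is the value at k that recseq s' must take
   for recseq (a :: s') to agree with z up to k, when size s' = n and bet a = t. *)
Fixpoint interp_poly (z : nat -> F) n k : {poly F} :=
  if k is k'.+1 then (z k'.+1)%:P - (c k')%:P * ('X + (gam n k')%:P) * interp_poly z n k'
  else 1.

Lemma horner_interp_poly z n k t :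
  (interp_poly z n k.+1).[t] = z k.+1 - c k * (t + gam n k) * (interp_poly z n k).[t].
Proof. by rewrite /= !hornerE. Qed.

Lemma size_interp_poly z n m : (forall k, (k < m)%N -> c k != 0) ->
  size (interp_poly z n m) = m.+1.
Proof.
elim: m => [|m IH] c_neq0; first by rewrite size_poly1.
have IHm : size (interp_poly z n m) = m.+1 by apply: IH => k /ltnW; apply: c_neq0.
have p_neq0 : interp_poly z n m != 0 by rewrite -size_poly_eq0 IHm.
have X_neq0 : 'X + (gam n m)%:P != 0 by rewrite -size_poly_eq0 size_XaddC.
have size_step : size ((c m)%:P * ('X + (gam n m)%:P) * interp_poly z n m) = m.+2.
  by rewrite -mulrA size_Cmul ?c_neq0 // size_mul // size_XaddC IHm.
rewrite /= addrC size_polyDl size_polyN size_step //.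
exact: leq_ltn_trans (size_polyC_leq1 _) _.
Qed.
End Recurrence.

Lemma recseq_interpolation {F : closedFieldType} (c : nat -> F) (gam : nat -> nat -> F)
    {bet : F -> F} {P : pred F} {d} :
  (forall t, exists2 a, P a & bet a = t) ->
  (forall k, (k < d)%N -> c k != 0) -> forall z : nat -> F, z 0%N = 1 ->
  exists s, [/\ size s = d, all P s & forall i, (i <= d)%N -> recseq c gam bet s i = z i].
Proof.
move=> bet_onto; elim: d => [|n IH] c_neq0 z z0.
  by exists [::]; split=> // i; rewrite leqn0 => /eqP ->.
have [t root_t] : exists t, root (interp_poly c gam z n n.+1) t.
  by apply/closed_rootP; rewrite size_interp_poly.
pose z' k := (interp_poly c gam z n k).[t].
have z'0 : z' 0%N = 1 by rewrite /z' /= hornerE.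
have [s [size_s Ps recseq_s]] := IH (fun k hk => c_neq0 k (ltnW hk)) z' z'0.
have [a Pa bet_a] := bet_onto t.
exists (a :: s); split; [by rewrite /= size_s | by rewrite /= Pa | case=> [|k] //= hk].
have recseq_next : recseq c gam bet s k.+1 = z' k.+1.
  case: (ltnP k n) => [/recseq_s // | n_le_k].
  have -> : k = n by apply/anti_leq; rewrite n_le_k -ltnS hk.
  by rewrite recseq_big ?size_s // /z' (rootP root_t).
by rewrite recseq_next size_s bet_a recseq_s // /z' horner_interp_poly subrK.
Qed.

Section StandardModule.
Context {F : fieldType}.
Variables (q u v us vs : F).
Hypothesis q_neq0 : q != 0.

Lemma act_K1_cons a s :
  act q (a :: s) K1 = block_mx (q *: act q s K1) 0 0 (q^-1 *: act q s K1).
Proof. by rewrite /= /kron2 !mxE /= !scale0r. Qed.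

Lemma act_K0_cons a s :
  act q (a :: s) K0 = block_mx (q^-1 *: act q s K0) 0 0 (q *: act q s K0).
Proof. by rewrite /= /kron2 !mxE /= !scale0r. Qed.

Lemma Rop_nil : Rop q u v [::] = 0.
Proof. by rewrite /Rop /= scaler0 mul0mx scaler0 addr0. Qed.

Lemma Lop_nil : Lop q us vs [::] = 0.
Proof. by rewrite /Lop /= scaler0 mul0mx scaler0 addr0. Qed.

Lemma Rop_cons a s :
  Rop q u v (a :: s) = block_mx (Rop q u v s) 0
    ((u * a / q) *: act q s K0 + (v * q) *: act q s K1) (Rop q u v s).
Proof.
rewrite /Rop act_K1_cons /= /kron2 !mxE /= !(scale0r, scale1r).
rewrite !add_block_mx mulmx_block !scale_block_mx add_block_mx.
rewrite !(mulmx0, mul0mx, addr0, add0r, scaler0) -!scalemxAl -!scalemxAr !scalerA.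
by rewrite mul1mx divfK // mulfK // [q^-1 * a]mulrC mulrA.
Qed.

Lemma Lop_cons a s :
  Lop q us vs (a :: s) = block_mx (Lop q us vs s)
    ((vs * q ^+ 2 / a) *: act q s K0 + us *: act q s K1) 0 (Lop q us vs s).
Proof.
rewrite /Lop act_K0_cons /= /kron2 !mxE /= !(scale0r, scale1r).
rewrite !add_block_mx mulmx_block !scale_block_mx add_block_mx.
rewrite !(mulmx0, mul0mx, addr0, add0r, scaler0) -!scalemxAl -!scalemxAr !scalerA.
have -> : vs * (q / a) * q = vs * q ^+ 2 / a by ring.
by rewrite mul1mx mulfK // divfK // [us *: act q s K1 + _]addrC.
Qed.

Definition weight s (z : 'cV[F]_(tdim (size s))) (l : F) :=
  act q s K1 *m z = l *: z /\ act q s K0 *m z = l^-1 *: z.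

Lemma weight0 s l : weight s 0 l.
Proof. by split; rewrite mulmx0 scaler0. Qed.

Lemma weightD s z1 z2 l : weight s z1 l -> weight s z2 l -> weight s (z1 + z2) l.
Proof. by move=> [h1 h2] [h3 h4]; split; rewrite mulmxDr ?h1 ?h2 ?h3 ?h4 scalerDr. Qed.

Lemma weightZ s z c l : weight s z l -> weight s (c *: z) l.
Proof. by move=> [h1 h2]; split; rewrite -scalemxAr ?h1 ?h2 !scalerA mulrC. Qed.

Lemma weight_Cartan (c0 c1 : F) {s z l} : weight s z l ->
  (c0 *: act q s K0 + c1 *: act q s K1) *m z = (c0 / l + c1 * l) *: z.
Proof. by move=> [h1 h0]; rewrite mulmxDl -!scalemxAl h1 h0 !scalerA scalerDl. Qed.

Lemma weight_cons a s z1 z2 l :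
  weight (a :: s) (col_mx z1 z2) l <-> weight s z1 (l / q) /\ weight s z2 (l * q).
Proof.
rewrite /weight act_K1_cons act_K0_cons !mul_block_col !(mul0mx, addr0, add0r).
rewrite !scale_col_mx -!scalemxAl.
have hqV : q^-1 != 0 by rewrite invr_eq0.
split=> [[/eq_col_mx [h1 h2] /eq_col_mx [h3 h4]]|[[h1 h3] [h2 h4]]].
  split; split.
  - by rewrite -[_ *m z1](scalerK q_neq0) h1 scalerA mulrC.
  - by rewrite -[_ *m z1](scalerK hqV) h3 scalerA invfM invrK mulrC.
  - by rewrite -[_ *m z2](scalerK hqV) h2 scalerA invrK mulrC.
  - by rewrite -[_ *m z2](scalerK q_neq0) h4 scalerA invfM mulrC.
split; congr col_mx; rewrite ?h1 ?h2 ?h3 ?h4 scalerA; congr (_ *: _).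
all: by rewrite ?invfM ?invrK mulrCA ?mulfV ?mulVf ?mulr1.
Qed.

Lemma weight_Rop s z l : weight s z l -> weight s (Rop q u v s *m z) (l / q ^+ 2).
Proof.
elim: s z l => [|a s IH] z l hz; first by rewrite Rop_nil mul0mx; apply: weight0.
rewrite -[z]vsubmxK in hz *; move/weight_cons: hz => [h1 h2].
rewrite Rop_cons mul_block_col mul0mx addr0; apply/weight_cons; split.
  by rewrite mulrAC; apply: IH.
apply: weightD; last by rewrite mulrAC; apply: IH.
rewrite (weight_Cartan _ _ h1); apply: weightZ.
by rewrite expr2 invfM mulrA mulfVK.
Qed.

Lemma weight_Lop s z l : weight s z l -> weight s (Lop q us vs s *m z) (l * q ^+ 2).
Proof.
elim: s z l => [|a s IH] z l hz; first by rewrite Lop_nil mul0mx; apply: weight0.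
rewrite -[z]vsubmxK in hz *; move/weight_cons: hz => [h1 h2].
rewrite Lop_cons mul_block_col mul0mx add0r; apply/weight_cons; split.
  apply: weightD; first by rewrite mulrAC; apply: IH.
  rewrite (weight_Cartan _ _ h2); apply: weightZ.
  by rewrite expr2 mulrA mulfK.
by rewrite mulrAC; apply: IH.
Qed.

Lemma weight_vx s : weight s (vx F (size s)) (q ^+ size s).
Proof.
elim: s => [|a s IH]; first by split; rewrite /= mul1mx expr0 ?invr1 scale1r.
apply/weight_cons; split; last exact: weight0.
by rewrite exprSr mulfK.
Qed.

Lemma Lop_vx s : Lop q us vs s *m vx F (size s) = 0.
Proof.
elim: s => [|a s IH]; first by rewrite Lop_nil mul0mx.
by rewrite /= Lop_cons mul_block_col IH mul0mx !mulmx0 !addr0 col_mx0.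
Qed.

(* Off-diagonal coefficients of R^i on x (x) w (w of weight l) and of L^i on
   y (x) w' (w' of weight m): sums of the scalars by which the off-diagonal
   blocks act on the successive weight vectors. *)
Definition Rcoef a l i :=
  u * a / (q * l) * geom (q ^+ 2) i + v * q * l * geom (q ^+ 2)^-1 i.

Definition Lcoef a m i :=
  vs * q ^+ 2 / (a * m) * geom (q ^+ 2)^-1 i + us * m * geom (q ^+ 2) i.

Lemma RcoefS a l i : l != 0 ->
  Rcoef a l i.+1 = u * a / q / (l / (q ^+ 2) ^+ i) + v * q * (l / (q ^+ 2) ^+ i) + Rcoef a l i.
Proof.
move=> l_neq0; have Qi_neq0 : (q ^+ 2) ^+ i != 0 by rewrite !expf_neq0.
rewrite /Rcoef !geomS exprVn; field; by rewrite q_neq0 l_neq0 Qi_neq0.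
Qed.

Lemma LcoefS a m i : a != 0 -> m != 0 ->
  Lcoef a m i.+1 = Lcoef a m i + (vs * q ^+ 2 / a / (m * (q ^+ 2) ^+ i) + us * (m * (q ^+ 2) ^+ i)).
Proof.
move=> a_neq0 m_neq0; have Qi_neq0 : (q ^+ 2) ^+ i != 0 by rewrite !expf_neq0.
rewrite /Lcoef !geomS exprVn; field; by rewrite a_neq0 m_neq0 Qi_neq0.
Qed.

Lemma weight_iterR s w l k : weight s w l ->
  weight s (iter k (mulmx (Rop q u v s)) w) (l / (q ^+ 2) ^+ k).
Proof.
move=> hw; elim: k => [|k IH]; first by rewrite expr0 divr1.
by rewrite iterS exprSr invfM mulrA; apply: weight_Rop.
Qed.

Lemma weight_iterL s w m k : weight s w m ->
  weight s (iter k (mulmx (Lop q us vs s)) w) (m * (q ^+ 2) ^+ k).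
Proof.
move=> hw; elim: k => [|k IH]; first by rewrite expr0 mulr1.
by rewrite iterS exprSr mulrA; apply: weight_Lop.
Qed.

Lemma iterR_cons a {s w l} i : l != 0 -> weight s w l ->
  iter i (mulmx (Rop q u v (a :: s))) (col_mx w 0) =
  col_mx (iter i (mulmx (Rop q u v s)) w) (Rcoef a l i *: iter i.-1 (mulmx (Rop q u v s)) w).
Proof.
move=> l_neq0 hw; elim: i => [|i IH]; first by rewrite /Rcoef /geom !big_ord0 !mulr0 addr0 scale0r.
rewrite iterS IH Rop_cons mul_block_col mul0mx addr0 (weight_Cartan _ _ (weight_iterR _ _ _ i hw)).
rewrite RcoefS // [in RHS]scalerDl; congr (col_mx _ (_ + _)).
case: i {IH} => [|i]; last by rewrite scalemxAr.
by rewrite /Rcoef /geom !big_ord0 !mulr0 addr0 !scale0r mulmx0.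
Qed.

Lemma iterL_cons a {s X Y m} i : a != 0 -> m != 0 -> weight s Y m ->
  iter i (mulmx (Lop q us vs (a :: s))) (col_mx X Y) =
  col_mx (iter i (mulmx (Lop q us vs s)) X + Lcoef a m i *: iter i.-1 (mulmx (Lop q us vs s)) Y)
         (iter i (mulmx (Lop q us vs s)) Y).
Proof.
move=> a_neq0 m_neq0 hY; elim: i => [|i IH].
  by rewrite /Lcoef /geom !big_ord0 !mulr0 addr0 scale0r addr0.
rewrite iterS IH Lop_cons mul_block_col mul0mx add0r (weight_Cartan _ _ (weight_iterL _ _ _ i hY)).
rewrite LcoefS // [in RHS]scalerDl mulmxDr -addrA; congr (col_mx (_ + (_ + _)) _).
case: i {IH} => [|i]; last by rewrite scalemxAr.
by rewrite /Lcoef /geom !big_ord0 !mulr0 addr0 !scale0r mulmx0.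
Qed.

(* The product Lcoef * Rcoef met in the split recurrence factors as
   cfactor i * (beta a + gamma n i), with only beta depending on a. *)
Definition beta a := u * us / q * a + v * vs * q ^+ 3 / a.

Definition gamma n i :=
  u * vs * q * (q ^+ 2) ^+ i / q ^+ (2 * n) + v * us * q * q ^+ (2 * n) / (q ^+ 2) ^+ i.

Definition cfactor i := geom (q ^+ 2) i.+1 * geom (q ^+ 2)^-1 i.+1.

Lemma Lcoef_Rcoef a n i : a != 0 ->
  Lcoef a (q ^+ n / (q ^+ 2) ^+ i) i.+1 * Rcoef a (q ^+ n) i.+1 = cfactor i * (beta a + gamma n i).
Proof.
move=> a_neq0; have Qi_neq0 : (q ^+ 2) ^+ i != 0 by rewrite !expf_neq0.
have qn_neq0 : q ^+ n != 0 by rewrite expf_neq0.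
rewrite /Lcoef /Rcoef /cfactor /beta /gamma !geom_inv ?expf_neq0 // mulnC exprM.
field; by rewrite q_neq0 a_neq0 Qi_neq0 qn_neq0.
Qed.

Lemma split_sequence s :
  all (fun a => a != 0) s -> forall i,
  iter i (mulmx (Lop q us vs s)) (iter i (mulmx (Rop q u v s)) (vx F (size s)))
  = recseq cfactor gamma beta s i *: vx F (size s).
Proof.
elim: s => [|a s IH] s_neq0 [|i]; rewrite ?scale1r //.
  by rewrite iterS Lop_nil mul0mx scale0r.
case/andP: s_neq0 => a_neq0 s_neq0.
have qn_neq0 : q ^+ size s != 0 by rewrite expf_neq0.
have Y_weight : weight s (Rcoef a (q ^+ size s) i.+1 *: iter i (mulmx (Rop q u v s)) (vx F (size s)))
    (q ^+ size s / (q ^+ 2) ^+ i) by apply/weightZ/weight_iterR/weight_vx.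
have L_kills :
    iter i.+1 (mulmx (Lop q us vs s)) (iter i (mulmx (Rop q u v s)) (vx F (size s))) = 0.
  by rewrite iterS IH // -scalemxAr Lop_vx scaler0.
change (vx F (size (a :: s))) with (col_mx (vx F (size s)) (0 : 'cV[F]_(tdim (size s)))).
rewrite (iterR_cons a i.+1 qn_neq0 (weight_vx s)) (iterL_cons a i.+1 a_neq0 _ Y_weight); last first.
  by rewrite mulf_neq0 ?invr_eq0 ?expf_neq0.
rewrite !iter_mulmx_scale L_kills scaler0 !IH // scale_col_mx scaler0 !scalerA -scalerDl.
by rewrite Lcoef_Rcoef.
Qed.

Lemma cfactor_neq0 {d} : feasible q d -> forall k, (k < d)%N -> cfactor k != 0.
Proof.
move=> q_feasible k lt_kd; have Qk_neq1 : (q ^+ 2) ^+ k.+1 != 1.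
  by rewrite -exprM; apply: q_feasible.
by rewrite mulf_neq0 ?geom_neq0 // exprVn invr_eq1.
Qed.
End StandardModule.

Lemma hyperbola_onto (F : closedFieldType) (A C : F) : A != 0 -> C != 0 ->
  forall t, exists2 x, x != 0 & A * x + C / x = t.
Proof.
move=> A_neq0 C_neq0 t.
have [x x_root] := @solve_monicpoly F 2 (fun k => if k == 0%N then - C / A else t / A) isT.
rewrite !big_ord_recl big_ord0 /= addr0 expr0 expr1 mulr1 in x_root.
have x_neq0 : x != 0.
  apply: contra_eq_neq x_root => ->; rewrite expr2 mul0r mulr0 addr0 eq_sym.
  by rewrite mulf_neq0 ?oppr_eq0 ?invr_eq0.
exists x => //; apply/eqP; rewrite -subr_eq0.
have -> : A * x + C / x - t = A / x * (x ^+ 2 - (- C / A + t / A * x)).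
  by field; rewrite x_neq0 A_neq0.
by rewrite x_root subrr mulr0.
Qed.

Theorem proposition7p2 (F : closedFieldType) (q : F)
  (hq0 : q != 0) (hq2 : q ^+ 2 != 1)
  (b c bs cs u v us vs : F)
  (hb : b != 0) (hc : c != 0) (hbs : bs != 0) (hcs : cs != 0)
  (huv : u * vs = - (b * bs * q^-1 * (q - q^-1) ^+ 2))
  (hvu : v * us = - (c * cs * q^-1 * (q - q^-1) ^+ 2))
  (d : nat) (hd : feasible q d)
  (zeta : nat -> F) (hz0 : zeta 0%N = 1) :
  exists alphas : seq F,
    [/\ size alphas = d,
        all (fun a => a != 0) alphas &
        forall i : nat, (i <= size alphas)%N ->
          iter i (mulmx (Lop q us vs alphas))
               (iter i (mulmx (Rop q u v alphas)) (vx F (size alphas)))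
          = zeta i *: vx F (size alphas)].
Proof.
have q_sub_qV_neq0 : q - q^-1 != 0.
  by apply: contra hq2; rewrite subr_eq0 => /eqP q_eq_qV; rewrite expr2 {2}q_eq_qV mulfV.
have : u * vs != 0 /\ v * us != 0.
  by rewrite huv hvu !oppr_eq0 !mulf_neq0 ?invr_eq0 ?expf_neq0.
rewrite !mulf_eq0 !negb_or => -[/andP [u_neq0 vs_neq0] /andP [v_neq0 us_neq0]].
have beta_onto : forall t, exists2 a, a != 0 & beta q u v us vs a = t.
  by apply: hyperbola_onto; rewrite !mulf_neq0 ?invr_eq0 ?expf_neq0.
have [s [size_s s_neq0 recseq_s]] :=
  recseq_interpolation (cfactor q) (gamma q u v us vs) beta_onto (cfactor_neq0 q hd) zeta hz0.
exists s; split=> // i le_is.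
by rewrite split_sequence // recseq_s // -size_s.
Qed.
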